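(* Let $X$ be a compact metric space with metric $d$ and let $M\ge1$. If an $M$-Lipschitz continuous map $f\colon X\to X$ satisfies $X=CR(f)$ and has the $L$-Lipschitz shadowing property for some $0<L<M^{-1}$, then $X$ is a finite set.
   Context: A map $f\colon X\to X$ is $M$-Lipschitz continuous if there is $\delta_0>0$ such that $d(f(x),f(y))\le Md(x,y)$ for all $x,y\in X$ with $d(x,y)\le\delta_0$. For $\delta>0$, a sequence $(x_i)_{i\ge0}$ is a $\delta$-pseudo orbit of $f$ if $d(f(x_i),x_{i+1})\le\delta$ for all $i\ge0$; it is $\epsilon$-shadowed by $x$ if $d(f^i(x),x_i)\le\epsilon$ for all $i\ge0$. For $L>0$, $f$ has the $L$-Lipschitz shadowing property if there is $\delta_0>0$ such that for every $0<\delta\le\delta_0$, every $\delta$-pseudo orbit of $f$ is $L\delta$-shadowed by some point of $X$. A $\delta$-chain is a finite sequence $(x_i)_{i=0}^k$, $k\ge1$, with $d(f(x_i),x_{i+1})\le\delta$ for $0\le i\le k-1$; a $\delta$-cycle is a $\delta$-chain with $x_0=x_k$. $CR(f)$ is the set of $x\in X$ such that for every $\delta>0$ there is a $\delta$-cycle with $x_0=x_k=x$. *)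

From Stdlib Require Import Reals List.
Open Scope R_scope.

Definition is_metric {X : Type} (d : X -> X -> R) : Prop :=
  (forall x y, 0 <= d x y) /\
  (forall x y, d x y = 0 <-> x = y) /\
  (forall x y, d x y = d y x) /\
  (forall x y z, d x z <= d x y + d y z).

Definition metric_open {X : Type} (d : X -> X -> R) (U : X -> Prop) : Prop :=
  forall x, U x -> exists r, 0 < r /\ forall y, d x y < r -> U y.

Definition metric_compact {X : Type} (d : X -> X -> R) : Prop :=
  forall (I : Type) (U : I -> X -> Prop),
    (forall i, metric_open d (U i)) ->
    (forall x, exists i, U i x) ->
    exists l : list I, forall x, exists i, In i l /\ U i x.

Definition M_Lipschitz {X : Type} (d : X -> X -> R) (f : X -> X) (M : R) : Prop :=
  exists delta0, 0 < delta0 /\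
    forall x y, d x y <= delta0 -> d (f x) (f y) <= M * d x y.

Definition pseudo_orbit {X : Type} (d : X -> X -> R) (f : X -> X) (delta : R)
  (xs : nat -> X) : Prop :=
  forall i, d (f (xs i)) (xs (S i)) <= delta.

Definition shadowed {X : Type} (d : X -> X -> R) (f : X -> X) (eps : R)
  (xs : nat -> X) (x : X) : Prop :=
  forall i, d (Nat.iter i f x) (xs i) <= eps.

Definition Lipschitz_shadowing {X : Type} (d : X -> X -> R) (f : X -> X) (L : R) : Prop :=
  exists delta0, 0 < delta0 /\
    forall delta, 0 < delta -> delta <= delta0 ->
      forall xs, pseudo_orbit d f delta xs ->
        exists x, shadowed d f (L * delta) xs x.

Definition delta_cycle_at {X : Type} (d : X -> X -> R) (f : X -> X) (delta : R) (x : X) : Prop :=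
  exists (k : nat) (xs : nat -> X),
    (1 <= k)%nat /\ xs 0%nat = x /\ xs k = x /\
    forall i, (i < k)%nat -> d (f (xs i)) (xs (S i)) <= delta.

Definition chain_recurrent {X : Type} (d : X -> X -> R) (f : X -> X) (x : X) : Prop :=
  forall delta, 0 < delta -> delta_cycle_at d f delta x.

Definition finite_type (X : Type) : Prop :=
  exists l : list X, forall x, In x l.

From Stdlib Require Import Reals Lra Lia.
Open Scope R_scope.

(* Let s be the distance from a point f^N x to a nearby point b. Shadowing the
   pseudo orbit that follows x for N steps and then jumps to b yields a point
   whose orbit makes the same trip with jump L s one step earlier; after N such
   moves the jump sits at time 0, and M-Lipschitz continuity gives
   s <= (L^N + (M L)^N) s, which is impossible for s > 0 once (M L)^N < 1/2.
   So f^N(X) is uniformly discrete; chain recurrence makes it dense, hence X is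
   uniformly discrete, and compactness makes it finite. *)

Section LipschitzShadowing.

Variables (X : Type) (d : X -> X -> R).
Hypothesis d_metric : is_metric d.

Lemma dist_nonneg x y : 0 <= d x y.
Proof. destruct d_metric as (H & _). apply H. Qed.

Lemma dist_eq0 x y : d x y = 0 <-> x = y.
Proof. destruct d_metric as (_ & H & _). apply H. Qed.

Lemma dist_refl x : d x x = 0.
Proof. apply dist_eq0; reflexivity. Qed.

Lemma dist_sym x y : d x y = d y x.
Proof. destruct d_metric as (_ & _ & H & _). apply H. Qed.

Lemma dist_triangle x y z : d x z <= d x y + d y z.
Proof. destruct d_metric as (_ & _ & _ & H). apply H. Qed.

Lemma compact_uniformly_discrete_finite r :
  metric_compact d -> 0 < r ->
  (forall y y', d y y' < r -> y = y') -> finite_type X.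
Proof.
  intros Hcomp Hr Hdisc.
  destruct (Hcomp X (fun c y => d c y < r)) as [l Hl].
  - intros c y Hy. exists (r - d c y). split; [lra|].
    intros y' Hy'. pose proof (dist_triangle c y y'). lra.
  - intros x. exists x. rewrite dist_refl. lra.
  - exists l. intros x. destruct (Hl x) as [c [Hc Hcx]].
    rewrite <- (Hdisc c x Hcx). exact Hc.
Qed.

Variable f : X -> X.

Variables M dL : R.
Hypothesis M_ge1 : 1 <= M.
Hypothesis dL_pos : 0 < dL.
Hypothesis f_lipschitz : forall x y, d x y <= dL -> d (f x) (f y) <= M * d x y.

Lemma iter_lipschitz n u v r :
  d u v <= r -> M ^ n * r <= dL ->
  d (Nat.iter n f u) (Nat.iter n f v) <= M ^ n * r.
Proof.
  intros Huv. induction n as [|n IH]; intros Hn; simpl in *.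
  - lra.
  - assert (HMn : 1 <= M ^ n) by (apply pow_R1_Rle; lra).
    assert (Hr : 0 <= r) by (pose proof (dist_nonneg u v); lra).
    assert (HMnr : 0 <= M ^ n * r) by nra.
    assert (Hgrow : M ^ n * r <= M * (M ^ n * r)) by nra.
    specialize (IH ltac:(lra)).
    eapply Rle_trans; [apply f_lipschitz; lra|].
    rewrite Rmult_assoc. apply Rmult_le_compat_l; lra.
Qed.

Lemma chain_recurrent_iter_dense :
  (forall x, chain_recurrent d f x) ->
  forall n y eta, 0 < eta -> exists c, d (Nat.iter n f c) y <= eta.
Proof.
  intros HCR n. induction n as [|n IH]; intros y eta Heta.
  - exists y. simpl. rewrite dist_refl. lra.
  - destruct (HCR y (eta / 2) ltac:(lra)) as [k [xs [Hk [_ [Hxk Hstep]]]]].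
    set (p := xs (pred k)).
    assert (Hp : d (f p) y <= eta / 2).
    { rewrite <- Hxk. replace (xs k) with (xs (S (pred k))) by (f_equal; lia).
      apply Hstep. lia. }
    set (e := Rmin dL (eta / (2 * M))).
    assert (He : 0 < e) by (apply Rmin_pos; [lra | apply Rdiv_lt_0_compat; lra]).
    assert (HMe : M * e <= eta / 2).
    { replace (eta / 2) with (M * (eta / (2 * M))) by (field; lra).
      apply Rmult_le_compat_l; [lra | apply Rmin_r]. }
    destruct (IH p e He) as [c Hc].
    exists c. simpl.
    assert (Hfc := f_lipschitz _ _ (Rle_trans _ _ _ Hc (Rmin_l _ _))).
    pose proof (dist_triangle (f (Nat.iter n f c)) (f p) y).
    assert (M * d (Nat.iter n f c) p <= M * e) by (apply Rmult_le_compat_l; lra).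
    lra.
Qed.

Definition splice (n : nat) (z b : X) (j : nat) : X :=
  if (j <? n)%nat then Nat.iter j f z else Nat.iter (j - n) f b.

Lemma pseudo_orbit_splice delta n z b :
  0 <= delta -> d (Nat.iter n f z) b <= delta ->
  pseudo_orbit d f delta (splice n z b).
Proof.
  intros Hdelta Hjump j. unfold splice.
  destruct (Nat.ltb_spec j n), (Nat.ltb_spec (S j) n); try lia.
  - change (f (Nat.iter j f z)) with (Nat.iter (S j) f z).
    rewrite dist_refl. exact Hdelta.
  - replace n with (S j) in * by lia.
    rewrite Nat.sub_diag. exact Hjump.
  - replace (S j - n)%nat with (S (j - n)) by lia.
    simpl. rewrite dist_refl. exact Hdelta.
Qed.

Lemma pseudo_orbit_cons delta x ys :
  pseudo_orbit d f delta ys -> d (f x) (ys 0%nat) <= delta ->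
  pseudo_orbit d f delta (fun j => match j with O => x | S j => ys j end).
Proof. intros Hys Hx [|j]; [exact Hx | exact (Hys j)]. Qed.

Variables L dS : R.
Hypothesis L_pos : 0 < L.
Hypothesis L_le1 : L <= 1.
Hypothesis f_shadowing : forall delta, 0 < delta -> delta <= dS ->
  forall xs, pseudo_orbit d f delta xs -> exists w, shadowed d f (L * delta) xs w.

Lemma shadowing_pull_back n : forall x b s,
  0 < s -> s <= dS -> d (Nat.iter n f x) b <= s ->
  exists z, d z x <= L ^ n * s /\ d (Nat.iter n f z) b <= L ^ n * s.
Proof.
  induction n as [|n IH]; intros x b s Hs HsS Hxb.
  - exists x. simpl in *. rewrite dist_refl. split; lra.
  - rewrite Nat.iter_succ_r in Hxb.
    destruct (IH (f x) b s Hs HsS Hxb) as [z [Hzx Hzb]].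
    assert (HLn : 0 < L ^ n <= 1).
    { split; [apply pow_lt; lra|]. rewrite <- (pow1 n). apply pow_incr; lra. }
    assert (Hfirst : d (f x) (splice n z b 0) <= L ^ n * s).
    { unfold splice. destruct (Nat.ltb_spec 0 n).
      - simpl. rewrite dist_sym. exact Hzx.
      - replace n with 0%nat in * by lia. simpl in *. lra. }
    (* x, z, f z, ..., f^(n-1) z, b, f b, ...: its only jumps, after times 0 and n,
       are at most L^n s. *)
    assert (Hys := pseudo_orbit_cons _ x _
                     (pseudo_orbit_splice (L ^ n * s) n z b ltac:(nra) Hzb) Hfirst).
    destruct (f_shadowing (L ^ n * s) ltac:(nra) ltac:(nra) _ Hys) as [w Hw].
    exists w. simpl (L ^ S n). rewrite Rmult_assoc. split.
    + exact (Hw 0%nat).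
    + assert (Hlast := Hw (S n)). simpl in Hlast.
      unfold splice in Hlast. rewrite Nat.ltb_irrefl, Nat.sub_diag in Hlast.
      exact Hlast.
Qed.

Lemma iter_image_isolated N :
  L ^ N + (M * L) ^ N < 1 ->
  forall x b, d (Nat.iter N f x) b <= Rmin dS dL -> b = Nat.iter N f x.
Proof.
  intros HN x b Hb.
  set (s := d (Nat.iter N f x) b) in *.
  destruct (Rle_lt_or_eq_dec 0 s (dist_nonneg _ _)) as [Hs | Hs].
  2: { symmetry. apply dist_eq0. symmetry. exact Hs. }
  pose proof (Rmin_l dS dL). pose proof (Rmin_r dS dL).
  destruct (shadowing_pull_back N x b s Hs ltac:(lra) (Rle_refl s)) as [z [Hzx Hzb]].
  assert (HLN : 0 <= L ^ N) by (apply pow_le; lra).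
  assert (HMLN : 0 <= (M * L) ^ N) by (apply pow_le; nra).
  assert (Hfar : d (Nat.iter N f z) (Nat.iter N f x) <= (M * L) ^ N * s).
  { rewrite Rpow_mult_distr, Rmult_assoc.
    apply iter_lipschitz; [exact Hzx|].
    rewrite <- Rmult_assoc, <- Rpow_mult_distr. nra. }
  pose proof (dist_triangle (Nat.iter N f x) (Nat.iter N f z) b) as Htri.
  fold s in Htri. rewrite dist_sym in Hfar. nra.
Qed.

Lemma chain_recurrent_uniformly_discrete N :
  (forall x, chain_recurrent d f x) ->
  L ^ N + (M * L) ^ N < 1 ->
  forall y y', d y y' < Rmin dS dL / 2 -> y = y'.
Proof.
  intros HCR HN y y' Hyy.
  assert (Hr : 0 < Rmin dS dL / 2).
  { pose proof (dist_nonneg y y'). lra. }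
  destruct (chain_recurrent_iter_dense HCR N y _ Hr) as [c Hc].
  assert (Hy : y = Nat.iter N f c) by (apply iter_image_isolated; lra).
  assert (Hy' : y' = Nat.iter N f c).
  { apply iter_image_isolated; [exact HN|].
    pose proof (dist_triangle (Nat.iter N f c) y y'). lra. }
  congruence.
Qed.

End LipschitzShadowing.

Theorem theorem1p3 (X : Type) (d : X -> X -> R) (f : X -> X) (M L : R) :
  is_metric d ->
  metric_compact d ->
  1 <= M ->
  M_Lipschitz d f M ->
  (forall x, chain_recurrent d f x) ->
  0 < L -> L < / M ->
  Lipschitz_shadowing d f L ->
  finite_type X.
Proof.
  intros Hd Hcomp HM [dL [HdL Hlip]] HCR HL HLM [dS [HdS Hsh]].
  assert (HML : M * L < 1).
  { apply (Rmult_lt_compat_l M) in HLM; [|lra]. rewrite Rinv_r in HLM; lra. }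
  destruct (pow_lt_1_zero (M * L) ltac:(rewrite Rabs_pos_eq; nra) (1 / 2) ltac:(lra))
    as [N HN].
  specialize (HN N (le_n N)).
  rewrite Rabs_pos_eq in HN by (apply pow_le; nra).
  assert (HLN : L ^ N <= (M * L) ^ N) by (apply pow_incr; nra).
  apply (compact_uniformly_discrete_finite X d Hd (Rmin dS dL / 2) Hcomp).
  - assert (0 < Rmin dS dL) by (apply Rmin_pos; lra). lra.
  - apply (chain_recurrent_uniformly_discrete X d Hd f M dL HM HdL Hlip L dS HL
             ltac:(nra) Hsh N HCR). lra.
Qed.
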